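(* Let $G=(V,E)$ be a $k$-edge-connected multigraph with $k\ge1$, let $\bar x\in\mathbb{R}^E_{\ge0}$ be defined by $\bar x_e=\tfrac3k$ for all $e\in E$, and let $\emptyset\ne S\subseteq V$ satisfy $|\delta(S)|\le\tfrac43k$. Then for every partition $\Pi$ of $S$ into nonempty parts, $$\sum_{P\in\Pi}\bar x\big(\delta_{G[S]}(P)\big)\ \ge\ 2(|\Pi|-1),$$ i.e. the restriction of $\bar x$ to the edges of $G[S]$ lies in the dominant of the spanning tree polytope of $G[S]$.
   Context: $\delta(S)$ is the set of edges of $G$ with exactly one endpoint in $S$; $G[S]$ is the subgraph induced by $S$ and $\delta_{G[S]}(P)$ is the set of edges of $G[S]$ with exactly one endpoint in $P$. For $F\subseteq E$, $\bar x(F)=\sum_{e\in F}\bar x_e$. $k$-edge-connected means $|\delta(U)|\ge k$ for all $\emptyset\neq U\subsetneq V$. *)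

From HB Require Import structures.
From mathcomp Require Import all_boot all_order all_algebra.
Set Implicit Arguments. Unset Strict Implicit. Unset Printing Implicit Defensive.
Import Order.TTheory GRing.Theory Num.Theory.

(* A (finite) multigraph: vertex type V, edge type E (parallel edges and
   loops allowed), each edge e has endpoints (ends e).1 and (ends e).2. *)

Definition delta (V E : finType) (ends : E -> V * V) (S : {set V}) : {set E} :=
  [set e | ((ends e).1 \in S) != ((ends e).2 \in S)].

Definition delta_induced (V E : finType) (ends : E -> V * V) (S P : {set V})
  : {set E} :=
  [set e | [&& (ends e).1 \in S, (ends e).2 \in S &
              ((ends e).1 \in P) != ((ends e).2 \in P)]].

Definition k_edge_connected (V E : finType) (ends : E -> V * V) (k : nat) :=
  forall U : {set V}, U != set0 -> U != [set: V] -> k <= #|delta ends U|.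

Definition xsum (R : numDomainType) (E : finType) (x : E -> R) (F : {set E}) : R :=
  (\sum_(e in F) x e)%R.

From mathcomp Require Import all_boot all_order all_algebra.
From mathcomp Require Import lra.
Import Order.TTheory GRing.Theory Num.Theory.
Local Open Scope ring_scope.

(* Each block P of Pi is a nonempty proper vertex set, so |delta(P)| >= k.
   An edge of delta(P) either lies in G[S], and is then counted in
   delta_{G[S]}(P), or leaves S, and then its endpoint in S lies in P; the
   latter edges are charged once to each edge of delta(S).  Summing over the
   blocks gives |Pi| k <= N + |delta(S)| <= N + 4k/3 with
   N = sum_P |delta_{G[S]}(P)|, hence 3N/k >= 3|Pi| - 4 >= 2(|Pi| - 1) as soon
   as |Pi| >= 2; the case |Pi| = 1 is trivial. *)

Lemma xsum_cst {R : numDomainType} {E : finType} (c : R) (F : {set E}) :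
  xsum (fun=> c) F = #|F|%:R * c.
Proof. by rewrite /xsum sumr_const mulr_natl. Qed.

Lemma partition_block_neqT {T : finType} {Pi : {set {set T}}} {S P : {set T}} :
  partition Pi S -> (1 < #|Pi|)%N -> P \in Pi -> P != [set: T].
Proof.
move=> pPi Pi_gt1 PPi; have : (0 < #|Pi :\ P|)%N by rewrite (cardsD1 P) PPi in Pi_gt1.
rewrite card_gt0 => /set0Pn [Q]; rewrite !inE => /andP [QP QPi].
have /set0Pn [v vQ] := partition_neq0 pPi QPi.
apply/eqP => PT.
have := trivIsetP (partition_trivIset pPi) _ _ QPi PPi QP.
by move/disjointFr => /(_ v vQ); rewrite PT in_setT.
Qed.

Section CutCounting.
Variables (V E : finType) (ends : E -> V * V) (S : {set V}).

Definition end_in (e : E) : V :=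
  if (ends e).1 \in S then (ends e).1 else (ends e).2.

Definition delta_out_from (P : {set V}) : {set E} :=
  [set e in delta ends S | end_in e \in P].

Lemma delta_sub_induced_out {P : {set V}} : P \subset S ->
  delta ends P \subset delta_induced ends S P :|: delta_out_from P.
Proof.
move=> PS; apply/subsetP => e; rewrite /delta_out_from /delta /delta_induced /end_in !inE.
case: (ends e) => u w /=.
by case uP: (u \in P); case wP: (w \in P) => //= _;
  [rewrite (subsetP PS u uP) | rewrite (subsetP PS w wP)];
  case: (_ \in S); rewrite /= ?uP ?wP.
Qed.

Lemma sum_card_delta_out (Pi : {set {set V}}) : trivIset Pi ->
  (\sum_(P in Pi) #|delta_out_from P| <= #|delta ends S|)%N.
Proof.
move=> tPi.
have -> : (\sum_(P in Pi) #|delta_out_from P| =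
    \sum_(P in Pi) \sum_(e in delta ends S) (end_in e \in P : nat))%N.
  apply: eq_bigr => P _; rewrite -sum1_card.
  rewrite (eq_bigl (fun e => (e \in delta ends S) && (end_in e \in P))); last first.
    by move=> e; rewrite inE.
  by rewrite big_mkcondr /=; apply: eq_bigr => e _; case: (end_in e \in P).
rewrite exchange_big /= -sum1_card; apply: leq_sum => e _.
case: (pickP [pred P in Pi | end_in e \in P]) => [B /andP [BPi eB] | none].
  rewrite (bigD1 B) //= eB big1 // => P /andP [PPi PB].
  case eP: (end_in e \in P) => //.
  by have := disjointFr (trivIsetP tPi _ _ PPi BPi PB) eP; rewrite eB.
by rewrite big1 // => P PPi; have := none P; rewrite /= PPi /= => ->.
Qed.

Lemma partition_edge_connected_bound (k : nat) (Pi : {set {set V}}) :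
  k_edge_connected ends k -> partition Pi S -> (1 < #|Pi|)%N ->
  (#|Pi| * k <= \sum_(P in Pi) #|delta_induced ends S P| + #|delta ends S|)%N.
Proof.
move=> kec pPi Pi_gt1.
apply: (@leq_trans (\sum_(P in Pi)
   (#|delta_induced ends S P| + #|delta_out_from P|)%N)); last first.
  by rewrite big_split /= leq_add2l sum_card_delta_out ?(partition_trivIset pPi).
rewrite -sum_nat_const; apply: leq_sum => P PPi.
apply: leq_trans (kec P (partition_neq0 pPi PPi) (partition_block_neqT pPi Pi_gt1 PPi)) _.
apply: leq_trans (subset_leq_card (delta_sub_induced_out (partitionS pPi PPi))) _.
exact: (leq_card_setU _ _).1.
Qed.

End CutCounting.

Lemma cut_count_ineq {R : realFieldType} {m k N d : R} :
  0 < k -> 2 <= m -> m * k <= N + d -> d <= 4 / 3 * k ->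
  2 * (m - 1) <= N * (3 / k).
Proof.
move=> k_gt0 m_ge2 mk_le dS.
have mk_ge2k : 0 <= (m - 2) * k by apply: mulr_ge0; [rewrite subr_ge0 | exact: ltW].
by rewrite mulrA ler_pdivlMr //; lra.
Qed.

Theorem mainTheorem7 (R : realFieldType) (V E : finType) (ends : E -> V * V)
    (k : nat) (S : {set V}) :
  (1 <= k)%N ->
  k_edge_connected ends k ->
  S != set0 ->
  (#|delta ends S|%:R <= (4%:R / 3%:R) * k%:R :> R) ->
  let xbar : E -> R := fun _ => 3%:R / k%:R in
  forall Pi : {set {set V}}, partition Pi S ->
    2%:R * ((#|Pi|)%:R - 1) <= \sum_(P in Pi) xsum xbar (delta_induced ends S P).
Proof.
move=> k_gt0 kec _ dS xbar Pi pPi.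
under eq_bigr do rewrite xsum_cst.
rewrite -mulr_suml -natr_sum.
case: (leqP #|Pi| 1) => [Pi_le1 | Pi_gt1].
  apply: (@le_trans _ _ 0); last by rewrite mulr_ge0 ?divr_ge0 ?ler0n.
  by rewrite pmulr_rle0 ?ltr0n // subr_le0 lern1.
apply: cut_count_ineq dS; rewrite ?ltr0n ?ler_nat //.
by rewrite -natrM -natrD ler_nat partition_edge_connected_bound.
Qed.
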